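(* Let $m\ge n\ge1$. Let $\mathcal E=\{\sqrt{p_i}U_i\mid1\le i\le N\}$ with each $U_i$ unitary on $\mathcal H_{2^m}$ and $\sum_ip_i=1$, let $\rho_a$ be an $(m-n)$-qubit density matrix and $\rho_0$ an $m$-qubit density matrix, and suppose $[\mathcal H_{2^n},\mathcal E,\rho_a,\rho_0]$ is a private quantum channel. Then there exist unitaries $U_1',\dots,U_N'$ on $\mathcal H_{2^{n+m}}$ such that, with $\mathcal E'=\{\sqrt{p_i}U_i'\mid1\le i\le N\}$ (the same probabilities $p_i$), $[\mathcal C_{2^{2n}},\mathcal E',\rho_a,\tilde I_{2^n}\otimes\rho_0]$ is a private quantum channel.
   Context: $\mathcal{H}_{2^k}$ denotes the Hilbert space of $k$ qubits, with computational basis $|0\rangle,\dots,|2^k-1\rangle$; $\tilde I_{M}=\frac1M I_M$. $\mathcal C_k=\{|i\rangle\mid 0\le i\le k-1\}$ is the set of the first $k$ computational basis states (so $\mathcal C_{2^{2n}}$ is the set of all $2n$-qubit classical basis states). Definition (private quantum channel, PQC): let $\mathcal S\subseteq\mathcal H_{2^n}$ be a set of pure $n$-qubit states, $\mathcal E=\{\sqrt{p_i}U_i\mid1\le i\le N\}$ with each $U_i$ unitary on $\mathcal H_{2^m}$, $p_i\ge0$, $\sum_ip_i=1$, $\rho_a$ an $(m-n)$-qubit density matrix, and $\rho_0$ an $m$-qubit density matrix. Then $[\mathcal S,\mathcal E,\rho_a,\rho_0]$ is a PQC iff for all $|\phi\rangle\in\mathcal S$, $\sum_{i=1}^Np_iU_i(|\phi\rangle\langle\phi|\otimes\rho_a)U_i^\dagger=\rho_0$.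 (If $m=n$ the ancilla is absent.) *)

From HB Require Import structures.
From mathcomp Require Import all_boot all_order all_algebra.
From mathcomp Require Import spectral.
From mathcomp Require Import complex mxtens.
From mathcomp Require Import reals.

Set Implicit Arguments.
Unset Strict Implicit.
Unset Printing Implicit Defensive.

Import Order.TTheory GRing.Theory Num.Theory Num.Def.
Local Open Scope ring_scope.
Local Open Scope complex_scope.
Local Open Scope sesquilinear_scope.

Section Quantum.
Variable R : realType.
Local Notation C := (R[i]).

Definition adj {m n} (A : 'M[C]_(m, n)) : 'M[C]_(n, m) := A ^t*.

(* Kronecker tensor product of a k-qubit and an l-qubit operator, seen as a
   (k+l)-qubit operator (standard Kronecker ordering, first factor = high bits). *)
Definition qtens {k l} (A : 'M[C]_(2 ^ k)) (B : 'M[C]_(2 ^ l)) : 'M[C]_(2 ^ (k + l)) :=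
  castmx (esym (expnD 2 k l), esym (expnD 2 k l)) (tensmx A B).

(* positive semidefinite: <v|A|v> >= 0 for all v (ordering of C: real and >= 0) *)
Definition psd {d} (A : 'M[C]_d) : Prop :=
  forall v : 'cV[C]_d, 0 <= (adj v *m A *m v) 0 0.

Definition density {k} (rho : 'M[C]_(2 ^ k)) : Prop :=
  psd rho /\ \tr rho = 1.

Definition pure_state {k} (phi : 'cV[C]_(2 ^ k)) : Prop :=
  (adj phi *m phi) 0 0 = 1.

Definition all_pure_states k : 'cV[C]_(2 ^ k) -> Prop := fun phi => pure_state phi.

Definition first_basis_states k (j : nat) : 'cV[C]_(2 ^ k) -> Prop :=
  fun phi => exists i : 'I_(2 ^ k), (i < j)%N /\ phi = delta_mx i 0.

Definition normalized_id M : 'M[C]_M := (M%:R)^-1%:M.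

(* Private quantum channel [S, E, rho_a, rho_0], E = {sqrt(p_i) U_i},
   S a set of pure n-qubit states, a = number of ancilla qubits,
   U_i unitaries on n + a qubits. *)
Definition PQC n a (S : 'cV[C]_(2 ^ n) -> Prop) N (p : 'I_N -> R)
    (U : 'I_N -> 'M[C]_(2 ^ (n + a))) (rho_a : 'M[C]_(2 ^ a))
    (rho_0 : 'M[C]_(2 ^ (n + a))) : Prop :=
  forall phi, S phi ->
    \sum_(i < N) (p i)%:C *: (U i *m qtens (phi *m adj phi) rho_a *m adj (U i))
    = rho_0.

End Quantum.

Arguments all_pure_states {R} k _.
Arguments first_basis_states {R} k j _.
Arguments normalized_id {R} M.

From HB Require Import structures.
From mathcomp Require Import all_boot all_order all_algebra.
From mathcomp Require Import spectral.
From mathcomp Require Import complex mxtens.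
From mathcomp Require Import reals.
From mathcomp Require Import ring fingroup perm.

(* Let L(X) = sum_j p_j U_j (X (x) rho_a) U_j^*.  L is linear and equals rho_0 on
   every pure state, so polarization with the states (e_u + e_v)/sqrt 2 and
   (e_u + i e_v)/sqrt 2 gives L(|u><v|) = [u = v] rho_0.  Let H be the n-fold
   Hadamard matrix, a unitary whose entries all have modulus 2^(-n/2), and B the
   generalized Bell transform |x1>|x2> |-> sum_a H_(a,x1) |a>|a + x2> (addition
   mod 2^n).  Then U'_j = (1 (x) U_j) (B (x) 1) sends |x1 x2><x1 x2| (x) rho_a to
   sum_(a,b) H_(a,x1) H_(b,x1)^* |a><b| (x) L(|a + x2><b + x2|)
   = sum_a |H_(a,x1)|^2 |a><a| (x) rho_0 = I/2^n (x) rho_0. *)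

Set Implicit Arguments.
Unset Strict Implicit.
Unset Printing Implicit Defensive.

Import Order.TTheory GRing.Theory Num.Theory.
Local Open Scope ring_scope.
Local Open Scope sesquilinear_scope.

Section TensorAlgebra.
Variable R : pzRingType.

Lemma tensmxDl m n p q (A B : 'M[R]_(m, n)) (X : 'M[R]_(p, q)) :
  (A + B) *t X = A *t X + B *t X.
Proof. by apply/matrixP => i j; rewrite !mxE mulrDl. Qed.

Lemma tensmxDr m n p q (A : 'M[R]_(m, n)) (X Y : 'M[R]_(p, q)) :
  A *t (X + Y) = A *t X + A *t Y.
Proof. by apply/matrixP => i j; rewrite !mxE mulrDr. Qed.

Lemma tensmxZl m n p q c (A : 'M[R]_(m, n)) (X : 'M[R]_(p, q)) :
  (c *: A) *t X = c *: (A *t X).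
Proof. by apply/matrixP => i j; rewrite !mxE mulrA. Qed.

Lemma tensmx_suml m n p q I (r : seq I) (P : pred I) (F : I -> 'M[R]_(m, n))
    (X : 'M[R]_(p, q)) :
  (\sum_(i <- r | P i) F i) *t X = \sum_(i <- r | P i) (F i *t X).
Proof. by apply: (big_morph _ (fun A B => tensmxDl A B X) (tens0mx X)). Qed.

Lemma tensmx_sumr m n p q I (r : seq I) (P : pred I) (F : I -> 'M[R]_(p, q))
    (A : 'M[R]_(m, n)) :
  A *t (\sum_(i <- r | P i) F i) = \sum_(i <- r | P i) (A *t F i).
Proof. exact: (big_morph _ (tensmxDr A) (tensmx0 A)). Qed.

Lemma tensmx11 m n : (1%:M : 'M[R]_m) *t (1%:M : 'M[R]_n) = 1%:M.
Proof.
apply/matrixP => i j.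
case: (mxtens_indexP i) => a b; case: (mxtens_indexP j) => a' b'.
rewrite tensmxE !mxE (can_eq (@mxtens_indexK _ _)) xpair_eqE.
by case: (a == a'); case: (b == b'); rewrite ?mulr1 ?mulr0.
Qed.

Lemma tensmx_delta m n p q (i : 'I_m) (j : 'I_n) (k : 'I_p) (l : 'I_q) :
  delta_mx i j *t delta_mx k l
  = delta_mx (mxtens_index (i, k)) (mxtens_index (j, l)) :> 'M[R]_(m * p, n * q).
Proof.
apply/matrixP => r s.
case: (mxtens_indexP r) => i' k'; case: (mxtens_indexP s) => j' l'.
rewrite tensmxE !mxE !(can_eq (@mxtens_indexK _ _)) !xpair_eqE.
by case: (i' == i); case: (j' == j); case: (k' == k); case: (l' == l);
  rewrite ?mulr1 ?mulr0.
Qed.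

Lemma tensmxA m1 n1 m2 n2 m3 n3 (A : 'M[R]_(m1, n1)) (B : 'M[R]_(m2, n2))
    (X : 'M[R]_(m3, n3)) :
  (A *t B) *t X = castmx (mulnA m1 m2 m3, mulnA n1 n2 n3) (A *t (B *t X)).
Proof.
apply/matrixP => i j.
case: (mxtens_indexP i) => i12 c; case: (mxtens_indexP i12) => a b.
case: (mxtens_indexP j) => j12 c'; case: (mxtens_indexP j12) => a' b'.
rewrite castmxE !tensmxE.
have cast_index m p r (x : 'I_m) (y : 'I_p) (z : 'I_r) (e : (m * (p * r) = m * p * r)%N) :
    cast_ord (esym e) (mxtens_index (mxtens_index (x, y), z))
    = mxtens_index (x, mxtens_index (y, z)).
  by apply: val_inj; rewrite /= mulnDl -mulnA addnA.
by rewrite !cast_index !tensmxE mulrA.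
Qed.

Lemma tensmx_castl m m' n n' p q (em : m = m') (en : n = n') (A : 'M[R]_(m, n))
    (X : 'M[R]_(p, q)) :
  castmx (em, en) A *t X
  = castmx (congr1 (muln^~ p) em, congr1 (muln^~ q) en) (A *t X).
Proof. by case: m' / em; case: n' / en. Qed.

Lemma tensmx_castr m n p p' q q' (ep : p = p') (eq : q = q') (A : 'M[R]_(m, n))
    (X : 'M[R]_(p, q)) :
  A *t castmx (ep, eq) X
  = castmx (congr1 (muln m) ep, congr1 (muln n) eq) (A *t X).
Proof. by case: p' / ep; case: q' / eq. Qed.

Lemma castmx_delta m m' n n' (em : m = m') (en : n = n') (i : 'I_m) (j : 'I_n) :
  castmx (em, en) (delta_mx i j : 'M[R]_(m, n))
  = delta_mx (cast_ord em i) (cast_ord en j).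
Proof. by case: m' / em; case: n' / en; rewrite !cast_ord_id. Qed.

End TensorAlgebra.

Section TensorComm.
Variable R : comPzRingType.

Lemma tensmxZr m n p q c (A : 'M[R]_(m, n)) (X : 'M[R]_(p, q)) :
  A *t (c *: X) = c *: (A *t X).
Proof. by apply/matrixP => i j; rewrite !mxE mulrCA. Qed.

End TensorComm.

Section Adjoint.
Variable C : numClosedFieldType.

Lemma trmxC_tens m n p q (A : 'M[C]_(m, n)) (B : 'M[C]_(p, q)) :
  (A *t B)^t* = A^t* *t B^t*.
Proof. by rewrite trmx_tens map_mxT. Qed.

Lemma trmxC_delta m n (i : 'I_m) (j : 'I_n) :
  (delta_mx i j : 'M[C]_(m, n))^t* = delta_mx j i.
Proof. by rewrite trmx_delta map_delta_mx. Qed.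

Lemma unitarymx1 m : (1%:M : 'M[C]_m) \is unitarymx.
Proof. by apply/unitarymxP; rewrite trmx1 map_mx1 mulmx1. Qed.

Lemma tensmx_unitary m n (A : 'M[C]_m) (B : 'M[C]_n) :
  A \is unitarymx -> B \is unitarymx -> A *t B \is unitarymx.
Proof.
move=> /unitarymxP uA /unitarymxP uB; apply/unitarymxP.
by rewrite trmxC_tens tensmx_mul uA uB tensmx11.
Qed.

Lemma sqrt_half_normC : sqrtC 2^-1 * (sqrtC 2^-1)^* = 2^-1 :> C.
Proof. by rewrite geC0_conj ?sqrtC_ge0 ?invr_ge0 ?ler0n // -expr2 sqrtCK. Qed.

Lemma castmx_unitary m m' (e : m = m') (A : 'M[C]_m) :
  A \is unitarymx -> castmx (e, e) A \is unitarymx.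
Proof. by case: m' / e. Qed.

End Adjoint.

Section Channel.
Variables (C : numClosedFieldType) (N : nat) (q : 'I_N -> C).

Definition channel m (V : 'I_N -> 'M[C]_m) (X : 'M[C]_m) : 'M[C]_m :=
  \sum_(j < N) q j *: (V j *m X *m (V j)^t*).

Lemma channelD m (V : 'I_N -> 'M[C]_m) X Y :
  channel V (X + Y) = channel V X + channel V Y.
Proof.
rewrite -big_split; apply: eq_bigr => j _.
by rewrite mulmxDr mulmxDl scalerDr.
Qed.

Lemma channelZ m (V : 'I_N -> 'M[C]_m) c X : channel V (c *: X) = c *: channel V X.
Proof.
rewrite scaler_sumr; apply: eq_bigr => j _.
by rewrite -scalemxAr -scalemxAl !scalerA mulrC.
Qed.

Lemma channel_sum m (V : 'I_N -> 'M[C]_m) I (r : seq I) (P : pred I) X :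
  channel V (\sum_(i <- r | P i) X i) = \sum_(i <- r | P i) channel V (X i).
Proof.
have channel0 : channel V 0 = 0.
  by apply: big1 => j _; rewrite mulmx0 mul0mx scaler0.
exact: (big_morph _ (channelD V) channel0).
Qed.

Lemma channel_mulmxr m (V : 'I_N -> 'M[C]_m) A X :
  channel (fun j => V j *m A) X = channel V (A *m X *m A^t*).
Proof. by apply: eq_bigr => j _; rewrite trmx_mul map_mxM !mulmxA. Qed.

Lemma channel_tens1mx m n (V : 'I_N -> 'M[C]_n) (Y : 'M[C]_m) X :
  channel (fun j => 1%:M *t V j) (Y *t X) = Y *t channel V X.
Proof.
rewrite /channel tensmx_sumr; apply: eq_bigr => j _.
by rewrite tensmxZr trmxC_tens trmx1 map_mx1 !tensmx_mul mul1mx mulmx1.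
Qed.

Lemma castmx_channel m m' (e : m = m') (V : 'I_N -> 'M[C]_m) X :
  castmx (e, e) (channel V X)
  = channel (fun j => castmx (e, e) (V j)) (castmx (e, e) X).
Proof. by case: m' / e. Qed.

End Channel.

Section Polarization.
Variables (C : numClosedFieldType) (N d D : nat) (q : 'I_N -> C).
Variables (V : 'I_N -> 'M[C]_(d * D)) (rho : 'M[C]_D) (sigma : 'M[C]_(d * D)).
Hypothesis channel_pure : forall phi : 'cV[C]_d,
  (phi^t* *m phi) 0 0 = 1 -> channel q V (phi *m phi^t* *t rho) = sigma.

Local Notation Lam X := (channel q V (X *t rho)).

Lemma channel_delta_diag u : Lam (delta_mx u u) = sigma.
Proof.
rewrite -(mul_delta_mx (0 : 'I_1)) -[delta_mx 0 u]trmxC_delta.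
by apply: channel_pure; rewrite trmxC_delta mul_delta_mx mxE !eqxx.
Qed.

Lemma channel_delta_cross u v a b : u != v -> a * a^* + b * b^* = 1 ->
  (a * b^*) *: Lam (delta_mx u v) + (b * a^*) *: Lam (delta_mx v u) = 0.
Proof.
move=> neq_uv ab1.
pose phi : 'cV[C]_d := a *: delta_mx u 0 + b *: delta_mx v 0.
have phi_adj : phi^t* = a^* *: delta_mx 0 u + b^* *: delta_mx 0 v.
  by rewrite linearD /= !linearZ /= map_mxD !map_mxZ !trmxC_delta.
have phi_norm : (phi^t* *m phi) 0 0 = 1.
  rewrite phi_adj mulmxDl !mulmxDr -!scalemxAl -!scalemxAr !mul_delta_mx_cond.
  rewrite (negbTE neq_uv) eq_sym (negbTE neq_uv) !eqxx !mulr1n !mulr0n.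
  by rewrite !scaler0 addr0 add0r !scalerA -scalerDl !mxE eqxx mulr1n mulr1 !(mulrC _^*).
have := channel_pure phi_norm.
rewrite phi_adj mulmxDl !mulmxDr -!scalemxAl -!scalemxAr !mul_delta_mx !scalerA.
rewrite !tensmxDl !channelD !tensmxZl !channelZ !channel_delta_diag => h.
apply: (addrI sigma); rewrite addr0 -{2}h -{1}(scale1r sigma) -ab1 scalerDl.
by rewrite addrACA [_ + (_ * _ *: sigma)]addrC.
Qed.

Lemma channel_delta u v : Lam (delta_mx u v) = (u == v)%:R *: sigma.
Proof.
case: eqVneq => [<-|neq_uv]; first by rewrite scale1r channel_delta_diag.
rewrite scale0r.
pose c := sqrtC (2^-1 : C).
have cc : c * c^* = 2^-1 := sqrt_half_normC C.
have c_norm : c * c^* + c * c^* = 1 by rewrite cc [RHS]splitr mul1r.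
have ci_norm : c * c^* + c * 'i * (c * 'i)^* = 1.
  by rewrite rmorphM /= mulrACA conjCi mulrN -expr2 sqrCi opprK mulr1 c_norm.
have /eqP := channel_delta_cross neq_uv c_norm.
rewrite -scalerDr scaler_eq0 cc invr_eq0 pnatr_eq0 /= addrC addr_eq0 => /eqP anti.
have /eqP := channel_delta_cross neq_uv ci_norm.
rewrite anti scalerN -scaleNr -scalerDl scaler_eq0 => /orP[|/eqP //].
have -> : c * (c * 'i)^* - c * 'i * c^* = - (c * c^* * 'i) *+ 2.
  by rewrite rmorphM /= conjCi; ring.
by rewrite mulrn_eq0 oppr_eq0 cc mulf_eq0 invr_eq0 pnatr_eq0 (negbTE (@neq0Ci C)).
Qed.

End Polarization.

Section FlatUnitary.
Variable C : numClosedFieldType.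

Definition flatmx d (H : 'M[C]_d) := forall i j, H i j * (H i j)^* = d%:R^-1.

Lemma tensmx_flat m n (A : 'M[C]_m) (B : 'M[C]_n) :
  flatmx A -> flatmx B -> flatmx (A *t B).
Proof.
move=> fA fB i j; case: (mxtens_indexP i) => a b; case: (mxtens_indexP j) => a' b'.
by rewrite tensmxE rmorphM mulrACA fA fB natrM invfM.
Qed.

Lemma ntensmx_unitary_flat m (A : 'M[C]_m) k :
  A \is unitarymx -> flatmx A ->
  ntensmx A k \is unitarymx /\ flatmx (ntensmx A k).
Proof.
move=> uA fA; case: k => [|k].
  split; first exact: unitarymx1.
  by move=> i j; rewrite !ord1 mxE conjC1 mulr1 invr1.
elim: k => [//|k [uAk fAk]].
by split; [exact: tensmx_unitary | exact: tensmx_flat].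
Qed.

Definition hadamard2 : 'M[C]_2 := sqrtC 2^-1 *: \matrix_(i, j) (-1) ^+ (i * j).

Lemma hadamard2_flat : flatmx hadamard2.
Proof.
move=> i j; rewrite !mxE rmorphM mulrACA sqrt_half_normC rmorphXn rmorphN1.
by rewrite -exprMn mulrNN mulr1 expr1n mulr1.
Qed.

Lemma hadamard2_unitary : hadamard2 \is unitarymx.
Proof.
apply/unitarymxP/matrixP => i j; rewrite !mxE !big_ord_recl big_ord0 !mxE /=.
have scaled a b : sqrtC 2^-1 * a * (sqrtC 2^-1 * b)^* = 2^-1 * (a * b^*) :> C.
  by rewrite rmorphM mulrACA sqrt_half_normC.
rewrite !scaled addr0 -mulrDr !rmorphXn rmorphN1.
case: i => [[|[|//]]] ?; case: j => [[|[|//]]] ?;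
  rewrite /bump /= ?expr0 ?expr1 ?mulrNN ?mulr1 ?mul1r ?subrr ?mulr0 //.
all: by rewrite mulrDr mulr1 [RHS]splitr mul1r.
Qed.

End FlatUnitary.

Section Gates.
Variable C : numClosedFieldType.

Lemma perm_mx_unitary n (s : 'S_n) : (perm_mx s : 'M[C]_n) \is unitarymx.
Proof.
by apply/unitarymxP; rewrite tr_perm_mx map_perm_mx -perm_mxM mulgV perm_mx1.
Qed.

Lemma mul_perm_mx_delta m n (s : 'S_m) (i : 'I_m) (j : 'I_n) :
  perm_mx s^-1 *m delta_mx i j = delta_mx (s i) j :> 'M[C]_(m, n).
Proof.
rewrite -row_permE; apply/matrixP => k l; rewrite !mxE.
by rewrite (can2_eq (permKV s) (permK s)).
Qed.

Lemma mul_delta_trmxC m n (A : 'M[C]_(m, n)) (x : 'I_n) :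
  A *m delta_mx x x *m A^t* = \sum_a \sum_b (A a x * (A b x)^*) *: delta_mx a b.
Proof.
rewrite [LHS]matrix_sum_delta; apply: eq_bigr => a _; apply: eq_bigr => b _.
by rewrite -(mul_delta_mx (0 : 'I_1)) mulmxA -colE -mulmxA -rowE mxE big_ord1 !mxE.
Qed.

Definition ctrlmx m n (P : 'I_m -> 'M[C]_n) : 'M[C]_(m * n) :=
  \sum_a delta_mx a a *t P a.

Lemma trmxC_ctrlmx m n (P : 'I_m -> 'M[C]_n) :
  (ctrlmx P)^t* = ctrlmx (fun a => (P a)^t*).
Proof.
rewrite /ctrlmx linear_sum raddf_sum /=; apply: eq_bigr => a _.
by rewrite trmxC_tens trmxC_delta.
Qed.

Lemma ctrlmx_conj_tens m n (P : 'I_m -> 'M[C]_n) a b Z :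
  ctrlmx P *m (delta_mx a b *t Z) *m (ctrlmx P)^t*
  = delta_mx a b *t (P a *m Z *m (P b)^t*).
Proof.
rewrite trmxC_ctrlmx /ctrlmx mulmx_suml (bigD1 a) //= big1 ?addr0; last first.
  by move=> c /negbTE ca; rewrite tensmx_mul mul_delta_mx_cond ca mulr0n tens0mx.
rewrite tensmx_mul mul_delta_mx mulmx_sumr (bigD1 b) //= big1 ?addr0.
  by rewrite tensmx_mul mul_delta_mx.
by move=> c /negbTE cb; rewrite tensmx_mul mul_delta_mx_cond eq_sym cb mulr0n tens0mx.
Qed.

Lemma ctrlmx_unitary m n (P : 'I_m -> 'M[C]_n) :
  (forall a, P a \is unitarymx) -> ctrlmx P \is unitarymx.
Proof.
move=> uP; apply/unitarymxP; rewrite trmxC_ctrlmx /ctrlmx -tensmx11.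
rewrite [X in X *t _]mx1_sum_delta tensmx_suml mulmx_suml; apply: eq_bigr => a _.
rewrite mulmx_sumr (bigD1 a) //= big1 ?addr0 => [|b /negbTE ba];
  rewrite tensmx_mul mul_delta_mx_cond ?eqxx ?(unitarymxP (uP a)) //.
by rewrite eq_sym ba mulr0n tens0mx.
Qed.

End Gates.

Section BellBasis.
Variables (C : numClosedFieldType) (d D : nat) (H : 'M[C]_d.+1).

Definition shiftmx (a : 'I_d.+1) : 'M[C]_d.+1 := perm_mx (perm (addrI a))^-1.

Lemma shiftmx_delta a x y : shiftmx a *m delta_mx x y = delta_mx (a + x) y :> 'M_(_, 1).
Proof. by rewrite mul_perm_mx_delta permE. Qed.

Lemma shiftmx_conj_delta a b x :
  shiftmx a *m delta_mx x x *m (shiftmx b)^t* = delta_mx (a + x) (b + x).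
Proof.
rewrite -(mul_delta_mx (0 : 'I_1)) mulmxA shiftmx_delta -mulmxA.
have -> : delta_mx 0 x *m (shiftmx b)^t* = (shiftmx b *m delta_mx x 0 : 'cV_d.+1)^t*.
  by rewrite trmx_mul map_mxM trmxC_delta.
by rewrite shiftmx_delta trmxC_delta mul_delta_mx.
Qed.

Definition bellmx : 'M[C]_(d.+1 * (d.+1 * D)) :=
  ctrlmx (fun a => shiftmx a *t 1%:M) *m (H *t 1%:M).

Lemma bellmx_unitary : H \is unitarymx -> bellmx \is unitarymx.
Proof.
move=> uH; apply: mul_unitarymx; last exact: tensmx_unitary (unitarymx1 _ _).
apply: ctrlmx_unitary => a.
exact: tensmx_unitary (perm_mx_unitary _ _) (unitarymx1 _ _).
Qed.

Lemma bellmx_conj_delta x1 x2 Z :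
  bellmx *m (delta_mx x1 x1 *t (delta_mx x2 x2 *t Z)) *m bellmx^t*
  = \sum_a \sum_b (H a x1 * (H b x1)^*)
      *: (delta_mx a b *t (delta_mx (a + x2) (b + x2) *t Z)).
Proof.
rewrite /bellmx trmx_mul map_mxM !mulmxA -[_ *m (H *t 1%:M)^t*]mulmxA.
rewrite -[ctrlmx _ *m _ *m _]mulmxA trmxC_tens trmx1 map_mx1 !tensmx_mul.
rewrite mul1mx mulmx1 mulmxA mul_delta_trmxC tensmx_suml mulmx_sumr mulmx_suml.
apply: eq_bigr => a _; rewrite tensmx_suml mulmx_sumr mulmx_suml.
apply: eq_bigr => b _; rewrite tensmxZl -scalemxAr -scalemxAl ctrlmx_conj_tens.
by rewrite trmxC_tens trmx1 map_mx1 !tensmx_mul mul1mx mulmx1 shiftmx_conj_delta.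
Qed.

End BellBasis.

Section PureToClassical.
Variables (C : numClosedFieldType) (N d D : nat) (q : 'I_N -> C).
Variables (H : 'M[C]_d.+1) (V : 'I_N -> 'M[C]_(d.+1 * D)).
Variables (rho : 'M[C]_D) (sigma : 'M[C]_(d.+1 * D)).
Hypothesis H_flat : flatmx H.
Hypothesis channel_pure : forall phi : 'cV[C]_d.+1,
  (phi^t* *m phi) 0 0 = 1 -> channel q V (phi *m phi^t* *t rho) = sigma.

Lemma channel_bellmx x1 x2 :
  channel q (fun j => (1%:M *t V j) *m bellmx D H)
    (delta_mx x1 x1 *t (delta_mx x2 x2 *t rho))
  = d.+1%:R^-1%:M *t sigma.
Proof.
rewrite channel_mulmxr bellmx_conj_delta [X in X *t sigma]scalar_mx_sum_delta.
rewrite tensmx_suml channel_sum; apply: eq_bigr => a _.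
rewrite channel_sum (bigD1 a) //= big1 ?addr0.
  rewrite channelZ channel_tens1mx (channel_delta channel_pure) eqxx scale1r.
  by rewrite H_flat tensmxZl.
move=> b /negbTE ba; rewrite channelZ channel_tens1mx (channel_delta channel_pure).
by rewrite (inj_eq (addIr x2)) eq_sym ba scale0r tensmx0 scaler0.
Qed.

End PureToClassical.

Lemma channel_pure_to_classical (C : numClosedFieldType) N d D (q : 'I_N -> C)
    (H : 'M[C]_d) (V : 'I_N -> 'M[C]_(d * D)) (rho : 'M[C]_D) (sigma : 'M[C]_(d * D)) :
  H \is unitarymx -> flatmx H -> (forall j, V j \is unitarymx) ->
  (forall phi : 'cV[C]_d,
    (phi^t* *m phi) 0 0 = 1 -> channel q V (phi *m phi^t* *t rho) = sigma) ->
  exists W : 'I_N -> 'M[C]_(d * (d * D)), (forall j, W j \is unitarymx) /\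
    forall x1 x2, channel q W (delta_mx x1 x1 *t (delta_mx x2 x2 *t rho))
                  = d%:R^-1%:M *t sigma.
Proof.
case: d => [|d] in H V sigma * => uH fH uV pure.
  by exists (fun=> 1%:M); split=> [j|[]//]; exact: unitarymx1.
exists (fun j => (1%:M *t V j) *m bellmx D H); split; last exact: channel_bellmx.
move=> j; apply: mul_unitarymx; last exact: bellmx_unitary.
exact: tensmx_unitary (unitarymx1 _ _) (uV j).
Qed.

Local Open Scope complex_scope.

Section Qubits.
Variable R : realType.

Lemma PQC_channelE n a (S : 'cV[R[i]]_(2 ^ n) -> Prop) N (p : 'I_N -> R)
    (U : 'I_N -> 'M[R[i]]_(2 ^ (n + a))) rho_a rho_0 :
  PQC S p U rho_a rho_0 <->
  forall phi, S phi ->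
    channel (fun j => (p j)%:C) U (qtens (phi *m phi^t*) rho_a) = rho_0.
Proof. exact: iff_refl. Qed.

Lemma qtens_delta n k (e : (2 ^ n * (2 ^ n * 2 ^ k) = 2 ^ (n + n + k))%N)
    (x1 x2 : 'I_(2 ^ n)) (rho : 'M[R[i]]_(2 ^ k)) :
  let x := cast_ord (esym (expnD 2 n n)) (mxtens_index (x1, x2)) in
  qtens (delta_mx x x) rho = castmx (e, e) (delta_mx x1 x1 *t (delta_mx x2 x2 *t rho)).
Proof.
rewrite /qtens -castmx_delta -tensmx_delta tensmx_castl tensmxA !castmx_comp.
exact: eq_castmx.
Qed.

End Qubits.

Theorem theorem6 (R : realType) (n k N : nat) (hn : (1 <= n)%N)
    (p : 'I_N -> R) (U : 'I_N -> 'M[R[i]]_(2 ^ (n + k)))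
    (rho_a : 'M[R[i]]_(2 ^ k)) (rho_0 : 'M[R[i]]_(2 ^ (n + k))) :
  (forall j, 0 <= p j) ->
  \sum_(j < N) p j = 1 ->
  (forall j, U j \is unitarymx) ->
  density rho_a ->
  density rho_0 ->
  PQC (all_pure_states n) p U rho_a rho_0 ->
  exists U' : 'I_N -> 'M[R[i]]_(2 ^ ((n + n) + k)),
    (forall j, U' j \is unitarymx) /\
    PQC (first_basis_states (n + n) (2 ^ (n + n))) p U' rho_a
      (castmx (congr1 (expn 2) (addnA n n k), congr1 (expn 2) (addnA n n k))
         (qtens (normalized_id (2 ^ n)) rho_0)).
Proof.
move=> _ _ U_unitary _ _ /PQC_channelE U_pure.
pose E := expnD 2 n k.
pose V j := castmx (E, E) (U j).
have V_pure (phi : 'cV_(2 ^ n)) : (phi^t* *m phi) 0 0 = 1 ->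
    channel (fun j => (p j)%:C) V (phi *m phi^t* *t rho_a) = castmx (E, E) rho_0.
  by move=> pure; rewrite -(U_pure phi pure) castmx_channel castmxKV.
have [H_unitary H_flat] :=
  ntensmx_unitary_flat n (hadamard2_unitary R[i]) (hadamard2_flat R[i]).
have [W [W_unitary W_classical]] := channel_pure_to_classical H_unitary H_flat
  (fun j => castmx_unitary E (U_unitary j)) V_pure.
have e : (2 ^ n * (2 ^ n * 2 ^ k) = 2 ^ (n + n + k))%N by rewrite !expnD mulnA.
exists (fun j => castmx (e, e) (W j)); split=> [j|]; first exact: castmx_unitary.
apply/PQC_channelE => _ [x [_ ->]]; rewrite trmxC_delta mul_delta_mx.
rewrite -[x](cast_ordK (expnD 2 n n)); case: (mxtens_indexP (cast_ord _ x)) => x1 x2.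
rewrite (qtens_delta e) -castmx_channel W_classical /qtens tensmx_castr !castmx_comp.
exact: eq_castmx.
Qed.
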